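(* Define words over $\{\sigma,\tau\}$ by $W_0=\sigma$ and, for $1\le k\le n-4$, $$W_k=\tau\cdot\prod_{i=1}^{n-2}\sigma^i\,W_{\Delta(k,i)}\,\gamma_{n-2-i}.$$ Then for every $k\in\{1,\dots,n-4\}$ and every seed $\psi\notin Hub_n$ with $height(\psi)=k$, the permutation $\widetilde\psi$ precedes $\psi^{(n-1)}$ on $PATH(n)$ and the word of edge labels of the subpath of $PATH(n)$ from $\widetilde\psi$ to $\psi^{(n-1)}$ equals $W_k$.
   Context: Fix an integer $n\ge 5$. An $n$-permutation is a sequence $(a_1,\dots,a_n)$ of the distinct elements of $\{1,\dots,n\}$. For $\pi=(a_1,\dots,a_n)$ put $\sigma(\pi)=(a_2,\dots,a_n,a_1)$ and $\tau(\pi)=(a_2,a_1,a_3,\dots,a_n)$. On $\{1,\dots,n-1\}$ let $a\oplus 1=a+1$ for $a<n-1$ and $(n-1)\oplus 1=1$; $a\ominus 1$ is the unique $b$ with $b\oplus 1=a$, and $a\oplus j$, $a\ominus j$ denote $j$-fold iterates. A seed is an $(n-1)$-tuple $\psi=(a_1,\dots,a_{n-1})$ of distinct elements of $\{1,\dots,n\}$ with $a_1=n$ and $a_2\oplus1\notin\{a_1,\dots,a_{n-1}\}$; its missing element is $mis(\psi)=a_2\oplus 1$. The package $perms(\psi)$ is the set of all $n$-permutations obtained from $\psi$ by inserting $mis(\psi)$ at any position and then applying any cyclic rotation. For a seed $\psi=(a_1,\dots,a_{n-1})$ with $x=mis(\psi)$: $height(\psi)$ is the largest $k\in\{1,\dots,n-2\}$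 such that $a_i=a_{i+1}\oplus 1$ for all $2\le i\le k$; $\widetilde\psi=(a_1,x,a_2,\dots,a_{n-1})$; $\psi^{(n-1)}=(x,a_2,\dots,a_{n-1},a_1)$. $Hub_n$ is the set of the $n-1$ seeds $(n,b,b\ominus1,\dots,b\ominus(n-3))$, $b\in\{1,\dots,n-1\}$. $\Delta(k,i)=\min(k-1,n-2-i)$. Words over $\{\sigma,\tau\}$ act on permutations left to right; $\sigma^i$ is $i$ copies of $\sigma$, $\gamma_k=\sigma^k\tau$, and $\prod_{i=a}^b u_i$ is the concatenation $u_au_{a+1}\cdots u_b$. Let $\pi_0=(n,n-1,\dots,1)$. For a seed $\psi$ with $x=mis(\psi)$ let $E(\psi)$ be the set of labelled directed edges consisting of a $\tau$-edge $\pi\to\tau(\pi)$ for every $\pi\in perms(\psi)$ whose second entry is $x$, and a $\sigma$-edge $\pi\to\sigma(\pi)$ for every $\pi\in perms(\psi)$ whose second entry is not $x$. Let $P$ be the union of $E(\psi)$ over all seeds; delete from $P$ every $\sigma$-edge leaving a vertex that has an outgoing $\tau$-edge in $P$; then add the $\sigma$-edge $\pi_0\to\sigma(\pi_0)$ and delete the $\tau$-edges $\pi_0\to\tau(\pi_0)$ and $\tau(\sigma(\pi_0))\to\sigma(\pi_0)$. The resulting graph $PATH(n)$ is a Hamiltonian path on all $n!$ $n$-permutations (the Sawada–Williams $\sigma\tau$-path), starting at $\tau(\pi_0)$. *)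

From mathcomp Require Import all_boot.
Set Implicit Arguments. Unset Strict Implicit. Unset Printing Implicit Defensive.

(* n-permutations are represented as sequences of naturals; the entries of a
   sequence are indexed from 0 in Rocq, so the paper's a_i is nth 0 s (i-1). *)

Inductive label := Sig | Tau.

Definition sigma (s : seq nat) : seq nat := rot 1 s.
Definition tau (s : seq nat) : seq nat :=
  match s with a :: b :: t => b :: a :: t | _ => s end.
Definition act (l : label) (s : seq nat) : seq nat :=
  match l with Sig => sigma s | Tau => tau s end.
(* words act left to right *)
Definition act_word (w : seq label) (s : seq nat) : seq nat :=
  foldl (fun p l => act l p) s w.

Definition osucc (n a : nat) : nat := if a < n - 1 then a + 1 else 1.
Definition opred (n a : nat) : nat := if 1 < a then a - 1 else n - 1.

Definition isSeed (n : nat) (psi : seq nat) : Prop :=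
  [/\ size psi = n - 1, uniq psi, all (fun a => (1 <= a) && (a <= n)) psi,
      nth 0 psi 0 = n & osucc n (nth 0 psi 1) \notin psi].

Definition mis (n : nat) (psi : seq nat) : nat := osucc n (nth 0 psi 1).

Definition inPerms (n : nat) (psi pi : seq nat) : Prop :=
  exists j r, j <= size psi /\
    pi = rot r (take j psi ++ mis n psi :: drop j psi).

Definition height_ok (n : nat) (psi : seq nat) (k : nat) : bool :=
  all (fun i => nth 0 psi (i - 1) == osucc n (nth 0 psi i)) (iota 2 (k - 1)).
Definition height (n : nat) (psi : seq nat) : nat :=
  \max_(1 <= k < n - 1 | height_ok n psi k) k.

Definition psi_tilde (n : nat) (psi : seq nat) : seq nat :=
  nth 0 psi 0 :: mis n psi :: behead psi.
Definition psi_rot (n : nat) (psi : seq nat) : seq nat :=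
  mis n psi :: rcons (behead psi) (nth 0 psi 0).

Definition inHub (n : nat) (psi : seq nat) : Prop :=
  exists b, 1 <= b <= n - 1 /\
    psi = n :: [seq iter j (opred n) b | j <- iota 0 (n - 2)].

Definition Delta (n k i : nat) : nat := minn (k - 1) (n - 2 - i).

Definition gamma (k : nat) : seq label := rcons (nseq k Sig) Tau.

(* W_k, defined with fuel (Delta (n,k,i) <= k-1, so fuel k suffices) *)
Fixpoint Wf (n fuel k : nat) : seq label :=
  match fuel with
  | 0 => [:: Sig]
  | f.+1 =>
      if k is 0 then [:: Sig] else
      Tau :: flatten [seq nseq i Sig ++ Wf n f (Delta n k i) ++ gamma (n - 2 - i)
                     | i <- iota 1 (n - 2)]
  end.
Definition W (n k : nat) : seq label := Wf n k k.

Definition pi0 (n : nat) : seq nat := rev (iota 1 n).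

Definition inP_tau (n : nat) (pi : seq nat) : Prop :=
  exists psi, isSeed n psi /\ inPerms n psi pi /\ nth 0 pi 1 = mis n psi.
Definition inP_sig (n : nat) (pi : seq nat) : Prop :=
  exists psi, isSeed n psi /\ inPerms n psi pi /\ nth 0 pi 1 <> mis n psi.

(* edges of PATH(n): an edge labelled l leaves pi (and goes to act l pi) *)
Definition pathEdge (n : nat) (l : label) (pi : seq nat) : Prop :=
  match l with
  | Sig => (inP_sig n pi /\ ~ inP_tau n pi) \/ pi = pi0 n
  | Tau => inP_tau n pi /\ pi <> pi0 n /\ pi <> tau (sigma (pi0 n))
  end.

Fixpoint walk (n : nat) (pi : seq nat) (w : seq label) : Prop :=
  match w with
  | [::] => True
  | l :: w' => pathEdge n l pi /\ walk n (act l pi) w'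
  end.

From mathcomp Require Import all_boot zify.

(* Write a seed as psi = n :: s and x = mis(psi).  For 0 <= j <= n-2 let
   pack n s j be psi with x inserted right after its (j+1)-st entry; the
   package perms(psi) consists of the rotations of these n-1 lists, and
   psi~ = pack n s 0, psi^(n-1) = rot 1 (pack n s 0).  The vertex
   rot r (pack n s j) (r < n) has second entry x iff r = j, so E(psi) puts a
   tau-edge there iff r = j.  By comparing packages of different seeds, for
   j >= 1 the only other vertex rot r (pack n s j) lying in a tau-edge of P
   is pack n s j itself, when 2 <= j and s_0 = s_1 (+) 1; the two edges
   deleted near pi_0 only concern the descending seed, of height n-2.
   Following W_k = tau . prod_i sigma^i W_Delta(k,i) gamma_(n-2-i): tau moves
   psi~ to rot (n-1) (pack n s (n-2)); block i (with j = n-1-i) rotates by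
   sigma^i to pack n s j, travels W_Delta(k,i) to rot 1 (pack n s j), rotates
   by sigma^(j-1) and takes the tau-edge to rot j (pack n s (j-1)), where the
   next block starts; the last block ends at psi^(n-1).  The inner word
   W_Delta is a single sigma when Delta = 0, and otherwise pack n s j is the
   psi~ of a nested seed of height Delta(k,i) < k, so the theorem follows by
   strong induction on k. *)

Definition walk_to (n : nat) (p : seq nat) (w : seq label) (q : seq nat) : Prop :=
  walk n p w /\ act_word w p = q.

Lemma walk_to_cons n l p w q :
  pathEdge n l p -> walk_to n (act l p) w q -> walk_to n p (l :: w) q.
Proof. by move=> hl [hw hq]. Qed.

Lemma walk_to_edge n l p : pathEdge n l p -> walk_to n p [:: l] (act l p).
Proof. by move=> hl; apply: walk_to_cons. Qed.

Lemma walk_to_cat n p w1 q w2 r :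
  walk_to n p w1 q -> walk_to n q w2 r -> walk_to n p (w1 ++ w2) r.
Proof.
elim: w1 p => [|l w1 IH] p; first by case=> _ <-.
by case=> -[hl hw] hq h2; apply: walk_to_cons => //; apply: IH.
Qed.

Arguments walk_to_cat {n p w1 q w2 r}.

Lemma walk_to_chain n (f : nat -> seq nat) (w : nat -> seq label) a m :
  (forall i, a <= i < a + m -> walk_to n (f i) (w i) (f i.+1)) ->
  walk_to n (f a) (flatten [seq w i | i <- iota a m]) (f (a + m)).
Proof.
elim: m a => [|m IH] a h; first by rewrite addn0.
apply: walk_to_cat (h a _) _; first lia.
by rewrite -addSnnS; apply: IH => i hi; apply: h; lia.
Qed.

Lemma walk_to_sigmas n (A : seq nat) a m : a + m <= size A ->
  (forall r, a <= r < a + m -> pathEdge n Sig (rot r A)) ->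
  walk_to n (rot a A) (nseq m Sig) (rot (a + m) A).
Proof.
elim: m a => [|m IH] a hm h; first by rewrite addn0.
apply: walk_to_cons; first by apply: h; lia.
rewrite /= /sigma -rotS; last lia.
by rewrite -addSnnS; apply: IH => [|r hr]; [lia | apply: h; lia].
Qed.

Section Rotations.
Variables (T : eqType) (x0 : T).

Lemma nth_rot (A : seq T) r q : q + r < size A -> nth x0 (rot r A) q = nth x0 A (r + q).
Proof.
move=> h; rewrite /rot nth_cat size_drop ifT; last lia.
by rewrite nth_drop.
Qed.

Lemma nth_rot_last (A : seq T) r : size A = r.+1 -> 0 < r -> nth x0 (rot r A) 1 = nth x0 A 0.
Proof.
move=> h hr; rewrite /rot nth_cat size_drop ifF; last lia.
by rewrite nth_take; [congr nth; lia | lia].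
Qed.

Lemma rot_amount_inj (A : seq T) i j : uniq A -> i < size A -> j < size A ->
  rot i A = rot j A -> i = j.
Proof.
move=> hu hi hj e; apply/eqP; rewrite -(nth_uniq x0 hi hj hu).
by rewrite -[i]addn0 -[j]addn0 -!nth_rot ?e //; lia.
Qed.

Lemma rot_head_inj (x : T) (A B : seq T) i j : uniq (x :: A) ->
  rot i (x :: A) = rot j (x :: B) -> x :: A = x :: B.
Proof.
move=> hu e.
have [m hm eAB] : exists2 m, m <= size (x :: B) & x :: A = rot m (x :: B).
  exists (rot_add (x :: B) j (size (rot j (x :: B)) - i)); first exact: leq_rot_add.
  by rewrite -rot_rot_add -[rot _ (rot j _)]/(rotr i _) -e rotK.
have huB : uniq (x :: B) by rewrite -(rot_uniq m) -eAB.
case: (ltnP m (size (x :: B))) => hmB; last by rewrite eAB rot_oversize.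
have hm0 : m = 0.
  apply/eqP; rewrite -(nth_uniq x0 hmB _ huB) //.
  by rewrite -[m]addn0 -nth_rot -?eAB //; lia.
by rewrite eAB hm0 rot0.
Qed.

End Rotations.

Lemma nth_ins (s : seq nat) j x q : j <= size s ->
  nth 0 (take j s ++ x :: drop j s) q =
  if q < j then nth 0 s q else if q == j then x else nth 0 s q.-1.
Proof.
move=> hj; rewrite nth_cat size_take_min (minn_idPl hj).
case: ifP => hq; first by rewrite nth_take.
case: eqP => [->|hne]; first by rewrite subnn.
have -> : q - j = (q.-1 - j).+1 by lia.
by rewrite /= nth_drop; congr nth; lia.
Qed.

Lemma perm_ins (s : seq nat) j x : perm_eq (take j s ++ x :: drop j s) (x :: s).
Proof. by rewrite -cat1s perm_catCA /= cat_take_drop. Qed.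

Lemma osucc_range n a : 2 <= n -> 1 <= osucc n a <= n - 1.
Proof. by move=> h; rewrite /osucc; case: (ltnP a (n - 1)); lia. Qed.

Lemma osucc_mod n a : a <= n - 1 -> osucc n a = a.+1 %[mod n - 1].
Proof.
move=> ha; rewrite /osucc; case: (ltnP a (n - 1)) => h; first by rewrite addn1.
have -> : a.+1 = (n - 1) + 1 by lia.
by rewrite modnDl.
Qed.

Lemma iter_osucc_mod n a m : 2 <= n -> a <= n - 1 ->
  iter m (osucc n) a = a + m %[mod n - 1].
Proof.
move=> hn ha; elim: m => [|m IH]; first by rewrite addn0.
have hr : iter m (osucc n) a <= n - 1.
  by case: m {IH} => [|m] //=; have := osucc_range n (iter m (osucc n) a) hn; lia.
by rewrite iterS osucc_mod // -addn1 -modnDml IH modnDml -addnA addn1.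
Qed.

Lemma iter_osucc_neq n a m : 2 <= n -> a <= n - 1 -> 0 < m < n - 1 ->
  iter m (osucc n) a <> a.
Proof.
move=> hn ha hm e; have := iter_osucc_mod n a m hn ha.
rewrite e -[a in a %% _ = _]addn0 => /eqP; rewrite eqn_modDl mod0n eq_sym => /eqP hd.
have : (n - 1) %| m by rewrite /dvdn hd.
by move/(dvdn_leq (proj1 (andP hm))); lia.
Qed.

Definition pack (n : nat) (s : seq nat) (j : nat) : seq nat :=
  n :: take j s ++ osucc n (nth 0 s 0) :: drop j s.

Lemma nth_pack n s j q : j <= size s ->
  nth 0 (pack n s j) q.+1 =
  if q < j then nth 0 s q else if q == j then osucc n (nth 0 s 0) else nth 0 s q.-1.
Proof. exact: nth_ins. Qed.

Lemma seed_cons n psi : 2 <= n -> isSeed n psi -> psi = n :: behead psi.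
Proof. by case: psi => [|a t] hn [] /= hs _ _ ha; [lia | rewrite ha]. Qed.

Lemma seed_size n s : isSeed n (n :: s) -> (size s).+2 = n.
Proof. by case=> /= h _ _ _ _; lia. Qed.

Lemma seed_entry n s q : isSeed n (n :: s) -> q < size s -> 1 <= nth 0 s q <= n - 1.
Proof.
case=> _ /andP [hns _] /allP ha _ _ hq.
have hin : nth 0 s q \in s by exact: mem_nth.
have /andP [h1 h2] : 0 < nth 0 s q <= n by apply: ha; rewrite inE hin orbT.
suff : nth 0 s q != n by move/eqP; lia.
by apply: contraNneq hns => <-.
Qed.

Lemma pack_uniq n s j : isSeed n (n :: s) -> uniq (pack n s j).
Proof.
case=> _ hu _ _ hx.
have hp : perm_eq (pack n s j) (n :: osucc n (nth 0 s 0) :: s) by rewrite perm_cons perm_ins.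
rewrite (perm_uniq hp); move: hu hx => /= /andP [hns ->].
by rewrite !inE !negb_or => /andP [hxn ->]; rewrite eq_sym hxn hns.
Qed.

Lemma size_pack n s j : size (pack n s j) = (size s).+2.
Proof. by rewrite /pack /= (perm_size (perm_ins s j _)). Qed.

Lemma rot_pack_last n s :
  rot (size s).+1 (pack n s (size s)) = osucc n (nth 0 s 0) :: n :: s.
Proof. by rewrite /pack take_size drop_size -cat_cons (rot_size_cat (n :: s)). Qed.

Lemma tau_pack0 n s : tau (pack n s 0) = rot (size s).+1 (pack n s (size s)).
Proof. by rewrite rot_pack_last /pack take0 drop0. Qed.

Lemma tau_rot_pack n s j : 1 <= j <= size s ->
  tau (rot j (pack n s j)) = rot j (pack n s j.-1).
Proof.
case: j => [//|j] /= hj; set x := osucc n (nth 0 s 0).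
have hpre : size (n :: take j s) = j.+1 by rewrite /= size_take_min; lia.
have -> : pack n s j.+1 = (n :: take j s) ++ nth 0 s j :: x :: drop j.+1 s.
  by rewrite /pack (take_nth 0) -?cats1 -?catA //; lia.
have -> : pack n s j = (n :: take j s) ++ x :: nth 0 s j :: drop j.+1 s.
  by rewrite /pack (drop_nth 0) //; lia.
by rewrite -{1}hpre -{2}hpre !rot_size_cat.
Qed.

Lemma psi_tilde_pack n s : psi_tilde n (n :: s) = pack n s 0.
Proof. by rewrite /pack take0 drop0. Qed.

Lemma psi_rot_pack n s : psi_rot n (n :: s) = rot 1 (pack n s 0).
Proof. by rewrite /pack take0 drop0 rot1_cons. Qed.

Lemma pack_in_perms n s j r : j <= size s -> inPerms n (n :: s) (rot r (pack n s j)).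
Proof. by move=> hj; exists j.+1, r. Qed.

Lemma perms_pack n s pi : inPerms n (n :: s) pi ->
  exists2 t, t <= size s & exists r, pi = rot r (pack n s t).
Proof.
case=> -[|j] [r [hj ->]]; last by exists j => //; exists r.
exists (size s) => //; exists (rot_add (pack n s (size s)) (size s).+1 r).
by rewrite -rot_rot_add rot_pack_last.
Qed.

Lemma rot_pack_second n s j r : isSeed n (n :: s) -> j <= n - 2 -> r < n ->
  nth 0 (rot r (pack n s j)) 1 = mis n (n :: s) <-> r = j.
Proof.
move=> hs hj hr; have hsz := seed_size n s hs.
have hP : size (pack n s j) = n by rewrite size_pack hsz.
have hu := pack_uniq n s j hs.
have hx : nth 0 (pack n s j) j.+1 = mis n (n :: s).
  by rewrite (nth_pack n s j j) ?ltnn ?eqxx //; lia.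
case: (ltnP r.+1 n) => hrn.
  have -> : nth 0 (rot r (pack n s j)) 1 = nth 0 (pack n s j) r.+1.
    by rewrite nth_rot ?addn1 // hP; lia.
  rewrite -hx; split=> [/eqP|->//].
  by rewrite nth_uniq ?hP //; [move/eqP; lia | lia].
rewrite nth_rot_last ?hP; [|lia|lia].
have := osucc_range n (nth 0 s 0); rewrite /mis /=; lia.
Qed.

(* If pack n s j (j >= 1) is also a package list pack n t r of another seed
   with r <> j, then r = 0, j >= 2 and s_0 = s_1 (+) 1: the missing element of
   n :: t is s_0, inserted right after n. *)
Lemma pack_reinsert n s t j r : 5 <= n -> isSeed n (n :: s) -> 1 <= j <= n - 2 ->
  r <= size t -> r != j -> pack n s j = pack n t r ->
  [/\ r = 0, 2 <= j & nth 0 s 0 = osucc n (nth 0 s 1)].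
Proof.
move=> hn hs hj hr hrj e; have hsz := seed_size n s hs.
have hjs : j <= size s by lia.
have hts : size t = size s.
  by have := congr1 size e; rewrite !size_pack => -[].
have hu := pack_uniq n s j hs; have hP : size (pack n s j) = n by rewrite size_pack hsz.
have hPj : nth 0 (pack n s j) j.+1 = osucc n (nth 0 s 0).
  by rewrite (nth_pack n s j j hjs) ltnn eqxx.
have hP1 : nth 0 (pack n s j) 1 = nth 0 s 0 by rewrite (nth_pack n s j 0 hjs) ifT //; lia.
have hPr : nth 0 (pack n s j) r.+1 = osucc n (nth 0 t 0).
  by rewrite e (nth_pack n t r r hr) ltnn eqxx.
case: r hr hrj e hPr => [|r] hr hrj e hPr; last first.
  have ht1 : nth 0 (pack n s j) 1 = nth 0 t 0 by rewrite e (nth_pack n t _ 0 hr).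
  move: hPr; rewrite -ht1 hP1 -hPj => /eqP.
  by rewrite nth_uniq ?hP //; [move=> /eqP [hrj']; rewrite hrj' eqxx in hrj | lia | lia].
have hP2 : nth 0 (pack n s j) 2 = nth 0 t 0 by rewrite e (nth_pack n t 0 1 hr).
have hchain : nth 0 s 0 = osucc n (nth 0 (pack n s j) 2) by rewrite hP2 -hPr.
case: (ltnP 1 j) => [hj2 | hj1].
  by split => //; rewrite hchain (nth_pack n s j 1 hjs) ifT.
have j1 : j = 1 by lia.
move: hchain; rewrite j1 in hjs *; rewrite (nth_pack n s 1 1 hjs) /= => hc.
have hs0 := seed_entry n s 0 hs ltac:(lia).
by case: (iter_osucc_neq n (nth 0 s 0) 2 ltac:(lia) ltac:(lia) ltac:(lia) (esym hc)).
Qed.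

Lemma pack_inP_tau n s j : isSeed n (n :: s) -> j <= n - 2 -> inP_tau n (rot j (pack n s j)).
Proof.
move=> hs hj; have hsz := seed_size n s hs.
exists (n :: s); split=> //; split; first by apply: pack_in_perms; lia.
by apply/(rot_pack_second n s j j hs hj); lia.
Qed.

Lemma inP_tau_pack n s j r : 5 <= n -> isSeed n (n :: s) -> 1 <= j <= n - 2 -> r < n ->
  inP_tau n (rot r (pack n s j)) ->
  r = j \/ [/\ r = 0, 2 <= j & nth 0 s 0 = osucc n (nth 0 s 1)].
Proof.
move=> hn hs hj hr [psi [hpsi [hperm hsec]]].
have epsi := seed_cons n psi ltac:(lia) hpsi.
move: hpsi hperm hsec; rewrite epsi; set t := behead psi => ht hperm hsec.
have [t' ht' [r' e]] := perms_pack n t _ hperm.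
have ePQ : pack n s j = pack n t t'.
  exact: (rot_head_inj nat 0 n _ _ r r' (pack_uniq n s j hs) e).
have hrt : r = t'.
  by apply/(rot_pack_second n t t' r ht _ hr); [have := seed_size n t ht; lia | rewrite -ePQ].
case: (eqVneq r j) => [-> | hrj]; [by left | right].
by apply: (pack_reinsert n s t j r) => //; rewrite hrt.
Qed.

Lemma pack_sig_edge n s j r : 5 <= n -> isSeed n (n :: s) -> 1 <= j <= n - 2 -> r < n ->
  r != j -> ~ [/\ r = 0, 2 <= j & nth 0 s 0 = osucc n (nth 0 s 1)] ->
  pathEdge n Sig (rot r (pack n s j)).
Proof.
move=> hn hs hj hr hrj hspec; have hsz := seed_size n s hs; left; split.
  exists (n :: s); split=> //; split; first by apply: pack_in_perms; lia.
  by move=> /(rot_pack_second n s j r hs ltac:(lia) hr) erj; rewrite erj eqxx in hrj.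
by case/(inP_tau_pack n s j r hn hs hj hr) => [erj | /hspec]; first by rewrite erj eqxx in hrj.
Qed.

Definition chain (n : nat) (s : seq nat) (k : nat) : Prop :=
  forall q, q.+2 <= k -> nth 0 s q = osucc n (nth 0 s q.+1).

Lemma height_okP n s k : height_ok n (n :: s) k <-> chain n s k.
Proof.
split=> [/allP h q hq | h].
  by have /eqP := h q.+2 ltac:(rewrite mem_iota; lia); rewrite subn1.
apply/allP => i; rewrite mem_iota => hi.
have -> : i = (i - 2).+2 by lia.
by rewrite subn1 /=; apply/eqP; apply: h; lia.
Qed.

Lemma height_ub n s m : (forall i, 1 <= i < n - 1 -> chain n s i -> i <= m) ->
  height n (n :: s) <= m.
Proof.
move=> h; apply/bigmax_leqP_seq => i; rewrite mem_index_iota => hi /height_okP.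
exact: h.
Qed.

Lemma height_lb n s i : 1 <= i < n - 1 -> chain n s i -> i <= height n (n :: s).
Proof.
move=> hi /height_okP hc.
by apply: (@leq_bigmax_seq _ _ _ (fun i => i)) => //; rewrite mem_index_iota.
Qed.

Lemma heightP n s k : 1 <= k -> k < n - 2 ->
  height n (n :: s) = k <-> chain n s k /\ nth 0 s (k - 1) <> osucc n (nth 0 s k).
Proof.
move=> hk hkn; have hk1 : (k - 1).+1 = k by lia.
have chain_break m : k < m -> chain n s m -> nth 0 s (k - 1) = osucc n (nth 0 s k).
  by move=> hm hc; rewrite -{2}hk1; apply: hc; lia.
split=> [hh | [hc hb]]; last first.
  apply/eqP; rewrite eqn_leq height_lb ?andbT; [|lia|done].
  by apply: height_ub => i hi hci; case: (leqP i k) => // /chain_break/(_ hci).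
have hc : chain n s k.
  apply/height_okP; case hok: (height_ok n (n :: s) k) => //.
  suff : height n (n :: s) <= k - 1 by lia.
  apply: height_ub => i hi hci; case: (leqP i (k - 1)) => // hik.
  by rewrite -hok; apply/height_okP => q hq; apply: hci; lia.
split=> // hb.
suff : k.+1 <= height n (n :: s) by lia.
apply: height_lb; first lia.
move=> q hq; case: (ltnP q.+2 k.+1) => hqk; first by apply: hc; lia.
have -> : q = k - 1 by lia.
by rewrite hk1.
Qed.

Lemma chain_iter n s k m : chain n s k -> m < k -> nth 0 s 0 = iter m (osucc n) (nth 0 s m).
Proof.
move=> hc; elim: m => [//|m IH] hm.
by rewrite iterSr -hc -?IH //; lia.
Qed.

Lemma pi0S m : pi0 m.+1 = m.+1 :: pi0 m.
Proof. by rewrite /pi0 -{1}(addn1 m) iotaD rev_cat add1n. Qed.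

Lemma nth_pi0 m i : i < m -> nth 0 (pi0 m) i = m - i.
Proof. by move=> h; rewrite /pi0 nth_rev size_iota // nth_iota; lia. Qed.

Lemma pi0_shape n : 2 <= n -> pi0 n = n :: n - 1 :: pi0 (n - 2).
Proof.
case: n => [|[|m]] // _; rewrite !pi0S.
have -> : m.+2 - 1 = m.+1 by lia.
by have -> : m.+2 - 2 = m by lia.
Qed.

Lemma tsp_shape n : 3 <= n -> tau (sigma (pi0 n)) = rot 1 (n :: n - 2 :: n - 1 :: pi0 (n - 3)).
Proof.
case: n => [|[|[|m]]] // _; rewrite !pi0S /sigma !rot1_cons /=.
have -> : m.+3 - 1 = m.+2 by lia.
have -> : m.+3 - 2 = m.+1 by lia.
by have -> : m.+3 - 3 = m by lia.
Qed.

Lemma pi0_tail_height n k : 1 <= k -> k < n - 2 -> height n (n :: pi0 (n - 2)) <> k.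
Proof.
move=> hk hkn /(heightP n _ k hk hkn) [_]; apply.
rewrite !nth_pi0 /osucc ?ifT; lia.
Qed.

Lemma rot_pack_eq n s j r Q : isSeed n (n :: s) -> j <= n - 2 -> r < n ->
  rot j (pack n s j) = rot r (n :: Q) -> pack n s j = n :: Q /\ j = r.
Proof.
move=> hs hj hr e; have hsz := seed_size n s hs.
have ePQ : pack n s j = n :: Q := rot_head_inj nat 0 n _ _ j r (pack_uniq n s j hs) e.
split=> //; move: e; rewrite ePQ.
apply: (rot_amount_inj nat 0); rewrite -ePQ ?pack_uniq ?size_pack //; lia.
Qed.

Lemma pack_pi0 n s j : isSeed n (n :: s) -> j <= n - 2 ->
  rot j (pack n s j) = pi0 n -> s = pi0 (n - 2).
Proof.
move=> hs hj e; have hsz := seed_size n s hs.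
have e0 : rot j (pack n s j) = rot 0 (n :: n - 1 :: pi0 (n - 2)).
  by rewrite rot0 -pi0_shape //; lia.
case: (rot_pack_eq n s j 0 _ hs hj _ e0); first lia.
by move=> + ej; rewrite ej /pack take0 drop0 => -[].
Qed.

Lemma pack_tsp n s j : 3 <= n -> isSeed n (n :: s) -> j <= n - 2 ->
  rot j (pack n s j) = tau (sigma (pi0 n)) -> s = pi0 (n - 2).
Proof.
move=> hn hs hj e; have hsz := seed_size n s hs.
rewrite tsp_shape // in e.
case: (rot_pack_eq n s j 1 _ hs hj _ e) => [|+ ej]; first lia.
case: s {hs e} hsz => [|a t] /= hsz; first lia.
rewrite ej /pack /= take0 drop0 => -[-> _ ->].
have -> : n - 2 = (n - 3).+1 by lia.
by rewrite pi0S.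
Qed.

Lemma pack_tau_edge n s j k : 5 <= n -> isSeed n (n :: s) -> 1 <= k <= n - 4 ->
  height n (n :: s) = k -> j <= n - 2 -> pathEdge n Tau (rot j (pack n s j)).
Proof.
move=> hn hs hk hh hj.
have hdesc : s <> pi0 (n - 2).
  by move=> es; apply: (pi0_tail_height n k); [lia | lia | rewrite -es].
split; first exact: pack_inP_tau.
split=> e; apply: hdesc; first exact: pack_pi0 n s j hs hj e.
exact: pack_tsp n s j ltac:(lia) hs hj e.
Qed.

Lemma Delta_le n k i : Delta n k i <= k - 1.
Proof. exact: geq_minl. Qed.

Lemma Wf_fuel n f f' k : k <= f -> k <= f' -> Wf n f k = Wf n f' k.
Proof.
elim: f f' k => [|f IH] [|f'] [|k] //= hf hf'.
congr (_ :: flatten _); apply: eq_map => i.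
by rewrite (IH f') //; have := Delta_le n k.+1 i; lia.
Qed.

Lemma W_unfold n k : 1 <= k -> W n k =
  Tau :: flatten [seq nseq i Sig ++ W n (Delta n k i) ++ gamma (n - 2 - i) | i <- iota 1 (n - 2)].
Proof.
case: k => [//|k] _; rewrite {1}/W /=.
congr (_ :: flatten _); apply: eq_map => i.
by rewrite /W (Wf_fuel n k (Delta n k.+1 i)) //; have := Delta_le n k.+1 i; lia.
Qed.

Definition nested_tail (n a : nat) (t : seq nat) (j : nat) : seq nat :=
  take (j - 1) t ++ osucc n a :: drop (j - 1) t.

Lemma pack_nested n a t j : a = osucc n (nth 0 t 0) -> 2 <= j -> j - 1 <= size t ->
  pack n (nested_tail n a t j) 0 = pack n (a :: t) j.
Proof.
move=> ha; case: j => // j hj hjt.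
rewrite /pack /nested_tail !subn1 /= in hjt *.
by rewrite take0 drop0 nth_ins // ifT -?ha //; lia.
Qed.

Lemma nested_seed n a t j : isSeed n [:: n, a & t] ->
  a = osucc n (nth 0 t 0) -> 2 <= j <= n - 2 -> isSeed n (n :: nested_tail n a t j).
Proof.
move=> hs ha hj; have hsz : (size t).+3 = n := seed_size n _ hs.
have hp := perm_ins t (j - 1) (osucc n a).
case: hs => _ /= /and3P [hnat hat hut] /and3P [_ _ hrng] _ hx.
move: hnat hx; rewrite !inE !negb_or => /andP [hna hnt] /and3P [hxn hxa hxt].
have hxa' : a != osucc n a by rewrite eq_sym.
split; rewrite /nested_tail //=.
- by rewrite (perm_size hp) /=; lia.
- by rewrite (perm_uniq hp) (perm_mem hp) /= inE negb_or eq_sym hxn hnt hxt hut.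
- rewrite leqnn (perm_all _ hp) /= hrng andbT.
  by have := osucc_range n a; lia.
- rewrite nth_ins ?ifT -?ha; [|lia|lia].
  by rewrite !inE (perm_mem hp) inE !negb_or eq_sym hna hxa' hat.
Qed.

Lemma nested_height n a t j k : 5 <= n -> isSeed n [:: n, a & t] ->
  height n [:: n, a & t] = k -> 2 <= k <= n - 4 -> 2 <= j <= n - 2 ->
  height n (n :: nested_tail n a t j) = minn (k - 1) (j - 1).
Proof.
move=> hn hs hh hk hj; have hsz : (size t).+3 = n := seed_size n _ hs.
have [hc hb] := proj1 (heightP n (a :: t) k ltac:(lia) ltac:(lia)) hh.
case: k hk hh hc hb => [|[|k]] hk hh hc hb; [lia | lia |].
case: j hj => [|[|j]] hj; [lia | lia |].
rewrite /nested_tail !subn1 /= in hb *.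
have hnth q : nth 0 (take j.+1 t ++ osucc n a :: drop j.+1 t) q =
    if q < j.+1 then nth 0 t q else if q == j.+1 then osucc n a else nth 0 t q.-1.
  by rewrite nth_ins //; lia.
apply/heightP; [lia | lia | split].
  move=> q hq; rewrite !hnth !ifT; [|lia|lia].
  by apply: (hc q.+1); lia.
case: (ltnP k.+2 j.+2) => hkj.
  rewrite (minn_idPl _); last lia.
  by rewrite subn1 /= !hnth !ifT; lia.
rewrite (minn_idPr _); last lia.
rewrite subn1 /= !hnth ltnSn ltnn eqxx /=.
have ha := chain_iter n (a :: t) k.+2 j.+1 hc ltac:(lia).
have ht := seed_entry n (a :: t) j.+1 hs ltac:(rewrite /=; lia).
rewrite /= in ha ht; rewrite ha -!iterS.
by apply/nesym/iter_osucc_neq; lia.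
Qed.

Definition loop_walk (n k : nat) (s : seq nat) : Prop :=
  walk_to n (pack n s 0) (W n k) (rot 1 (pack n s 0)).

Lemma inner_walk n k s i : 5 <= n -> isSeed n (n :: s) -> 1 <= k <= n - 4 ->
  height n (n :: s) = k -> 1 <= i <= n - 2 ->
  (forall k' t, k' < k -> 1 <= k' <= n - 4 -> isSeed n (n :: t) ->
     height n (n :: t) = k' -> loop_walk n k' t) ->
  walk_to n (pack n s (n - 1 - i)) (W n (Delta n k i)) (rot 1 (pack n s (n - 1 - i))).
Proof.
move=> hn hs hk hh hi IH; move ej : (n - 1 - i) => j.
have hD : Delta n k i = minn (k - 1) (j - 1) by rewrite /Delta; congr minn; lia.
have [hc hb] := proj1 (heightP n s k ltac:(lia) ltac:(lia)) hh.
case: (posnP (Delta n k i)) => hD0.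
  rewrite hD0; apply: walk_to_edge; rewrite -[pack n s j]rot0.
  apply: (pack_sig_edge n s j 0 hn hs); [lia | lia | by rewrite eq_sym -lt0n; lia |].
  case=> _ hj2 hs01; apply: hb.
  by have -> : k = 1 by lia.
case: s hs hh hc hb => [|a t] hs hh hc hb; first by have := seed_size n _ hs; rewrite /=; lia.
have ha : a = osucc n (nth 0 t 0) by apply: (hc 0); lia.
have hst : (size t).+3 = n := seed_size n _ hs.
rewrite hD -pack_nested //; [|lia|lia].
apply: IH; [lia | lia | apply: nested_seed => //; lia | apply: nested_height => //; lia].
Qed.

Lemma block_walk n k s i : 5 <= n -> isSeed n (n :: s) -> 1 <= k <= n - 4 ->
  height n (n :: s) = k -> 1 <= i <= n - 2 ->
  walk_to n (pack n s (n - 1 - i)) (W n (Delta n k i)) (rot 1 (pack n s (n - 1 - i))) ->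
  walk_to n (rot (n - i) (pack n s (n - 1 - i)))
    (nseq i Sig ++ W n (Delta n k i) ++ gamma (n - 2 - i))
    (rot (n - i.+1) (pack n s (n - 1 - i.+1))).
Proof.
move=> hn hs hk hh hi hinner; have hsz := seed_size n s hs.
move: hinner; move ej : (n - 1 - i) => j hinner.
have -> : n - i = j.+1 by lia.
have -> : n - i.+1 = j by lia.
have -> : n - 1 - i.+1 = j.-1 by lia.
have -> : gamma (n - 2 - i) = nseq (j - 1) Sig ++ [:: Tau].
  by rewrite /gamma -cats1; congr (nseq _ _ ++ _); lia.
set P := pack n s j; have hP : size P = n by rewrite size_pack.
have hsig r : 0 < r < n -> r != j -> pathEdge n Sig (rot r P).
  by move=> hr hrj; apply: pack_sig_edge => //; [lia | lia | by case=> r0; lia].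
have run1 : walk_to n (rot j.+1 P) (nseq i Sig) P.
  have e : rot (j.+1 + i) P = P.
    have -> : j.+1 + i = size P by rewrite hP; lia.
    exact: rot_size.
  rewrite -[in X in walk_to _ _ _ X]e.
  apply: walk_to_sigmas => [|r hr]; first lia.
  by apply: hsig; rewrite ?neq_ltn; lia.
have run2 : walk_to n (rot 1 P) (nseq (j - 1) Sig) (rot j P).
  have e : 1 + (j - 1) = j by lia.
  rewrite -[in X in walk_to _ _ _ X]e.
  apply: walk_to_sigmas => [|r hr]; first lia.
  by apply: hsig; rewrite ?neq_ltn; lia.
have step : walk_to n (rot j P) [:: Tau] (rot j (pack n s j.-1)).
  rewrite -tau_rot_pack; last lia.
  by apply: walk_to_edge; apply: (pack_tau_edge n s j k) => //; lia.
exact: walk_to_cat run1 (walk_to_cat hinner (walk_to_cat run2 step)).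
Qed.

Lemma loop_walk_of_height n k s : 5 <= n -> 1 <= k <= n - 4 -> isSeed n (n :: s) ->
  height n (n :: s) = k -> loop_walk n k s.
Proof.
move=> hn; elim/ltn_ind: k s => k IH s hk hs hh; have hsz := seed_size n s hs.
pose f i := rot (n - i) (pack n s (n - 1 - i)).
have hf1 : f 1 = act Tau (pack n s 0).
  by rewrite /act tau_pack0 /f; congr (rot _ (pack _ _ _)); lia.
have hfn : f (1 + (n - 2)) = rot 1 (pack n s 0) by rewrite /f; congr (rot _ (pack _ _ _)); lia.
rewrite /loop_walk W_unfold; last lia.
apply: walk_to_cons; first by rewrite -[pack n s 0]rot0; apply: (pack_tau_edge n s 0 k) => //; lia.
rewrite -hfn -hf1; apply: walk_to_chain => i hi.
apply: (block_walk n k s i hn hs hk hh); first lia.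
apply: (inner_walk n k s i hn hs hk hh); first lia.
by move=> k' t hk'; apply: IH.
Qed.

(* The theorem; the hub hypothesis is implied by height psi <= n-4. *)
Theorem mainTheorem5 (n : nat) (hn : 5 <= n) (k : nat) (hk : 1 <= k <= n - 4)
  (psi : seq nat) :
  isSeed n psi -> ~ inHub n psi -> height n psi = k ->
  walk n (psi_tilde n psi) (W n k) /\
  act_word (W n k) (psi_tilde n psi) = psi_rot n psi.
Proof.
move=> hs _ hh.
have epsi := seed_cons n psi ltac:(lia) hs.
rewrite epsi psi_tilde_pack psi_rot_pack in hs hh *.
exact: loop_walk_of_height.
Qed.
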